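(* With probability at least $1-o_n(1)$, $\mathbf f\sim\mathcal D^{J}_{\mathrm{no}}$ is $0.2$-far from every $(n/2)$-junta, i.e. $\Pr_x[\mathbf f(x)\ne g(x)]\ge 0.2$ for every $g:\{0,1\}^n\to\{0,1\}$ depending on at most $n/2$ coordinates.
   Context: Let $n$ be even and $a=n/2$. For a set $A$ of size $a$ and $z\in\{0,1\}^A$ with Hamming weight $|z|$: $h^{(-,0)}(z)=1$ iff $|z|>a/2+0.05\sqrt a$; $h^{(-,1)}(z)=1$ iff $|z|<a/2-0.05\sqrt a$. A draw $\mathbf f\sim\mathcal D^{J}_{\mathrm{no}}$: choose $\mathbf A\subseteq[n]$ uniformly of size $a$, $\mathbf C=[n]\setminus\mathbf A$, and a uniformly random function $\mathbf b:\{0,1\}^{\mathbf C}\to\{0,1\}$; set $\mathbf f(x)=h^{(-,\mathbf b(x_{\mathbf C}))}(x_{\mathbf A})$, where $x_B$ is the restriction of $x$ to $B$. *)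

From HB Require Import structures.
From mathcomp Require Import all_boot all_order all_algebra.
From mathcomp Require Import boolp reals.
Set Implicit Arguments. Unset Strict Implicit. Unset Printing Implicit Defensive.
Import Order.TTheory GRing.Theory Num.Theory.
Local Open Scope ring_scope.

Definition pt (n : nat) := {ffun 'I_n -> bool}.

Definition wt n (A : {set 'I_n}) (x : pt n) : nat := #|[set i in A | x i]|.

Section D.
Variable R : realType.

Definition h0 n (A : {set 'I_n}) (x : pt n) : bool :=
  let a := (n./2)%:R : R in
  (wt A x)%:R > a / 2 + (1/20) * Num.sqrt a.
Definition h1 n (A : {set 'I_n}) (x : pt n) : bool :=
  let a := (n./2)%:R : R in
  (wt A x)%:R < a / 2 - (1/20) * Num.sqrt a.

(* restriction x_C, represented as the point agreeing with x on C and
   false outside C *)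
Definition restr n (C : {set 'I_n}) (x : pt n) : pt n :=
  [ffun i => (i \in C) && x i].

Definition fno n (A : {set 'I_n}) (b : {ffun pt n -> bool}) (x : pt n) : bool :=
  if b (restr (~: A) x) then h1 A x else h0 A x.

Definition is_junta n (k : nat) (g : pt n -> bool) : Prop :=
  exists S : {set 'I_n}, (#|S| <= k)%N /\
    forall x y : pt n, (forall i, i \in S -> x i = y i) -> g x = g y.

Definition dist n (f g : pt n -> bool) : R :=
  #|[set x : pt n | f x != g x]|%:R / (2 ^ n)%:R.

Definition far_from_juntas n (eps : R) (k : nat) (f : pt n -> bool) : Prop :=
  forall g : pt n -> bool, is_junta k g -> eps <= dist f g.

(* Pr_{f ~ D^J_no}[P f]: A uniform among a-subsets, b uniform.
   (b uniform on all functions pt n -> bool; only its values on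
   restricted points matter, which are then uniform on {0,1}^C.) *)
Definition prob_no n (P : (pt n -> bool) -> Prop) : R :=
  let As := [set A : {set 'I_n} | #|A| == n./2] in
  (\sum_(A in As)
      (#|[set b : {ffun pt n -> bool} | `[< P (fno A b) >] ]|%:R
         / (#|{ffun pt n -> bool}|)%:R)) / (#|As|)%:R.
End D.

From HB Require Import structures.
From mathcomp Require Import all_boot all_order all_algebra.
From mathcomp Require Import boolp reals.
From mathcomp Require Import zify ring lra.
Import Order.TTheory GRing.Theory Num.Theory.
Set Implicit Arguments. Unset Strict Implicit. Unset Printing Implicit Defensive.

(* Fix A with |A| = a = n/2 and let C be its complement.  Complementing x_A swaps
   h^(-,0) and h^(-,1), which are disjoint, and the band between their thresholds
   has width sqrt(a)/10 while each Hamming layer of {0,1}^A has at most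
   2^a/sqrt(a) points; hence each threshold function accepts at least 43% of
   {0,1}^A.  Let g be a junta on S with |S| <= a.  If S = C, then g is constant on
   every fibre x_C = v, where f is one of the two threshold functions, so g errs
   on 43% of each fibre.  Otherwise some i in C is irrelevant to g; whenever
   b(x_C) <> b(x_C + e_i) and x_A lies outside the band, f(x) <> f(x + e_i), so g
   errs on x or on x + e_i.  By a second-moment bound, outside a set of b of
   density 1250/2^a, at least 48% of the v in {0,1}^C have b(v) <> b(v + e_i);
   a union bound over the a coordinates of C concludes. *)

Lemma leq_bin_succ n m : (2 * m < n)%N -> ('C(n, m) <= 'C(n, m.+1))%N.
Proof.
move=> lt_2m_n; rewrite -(@leq_pmul2l m.+1) // mul_bin_left.
by apply: leq_mul => //; lia.
Qed.

Lemma leq_bin_half n w : ('C(n, w) <= 'C(n, n./2))%N.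
Proof.
have n_half : n = (odd n + 2 * n./2)%N by rewrite -{1}(odd_double_half n) -mul2n.
suff low k : (k <= n./2)%N -> ('C(n, k) <= 'C(n, n./2))%N.
  case: (leqP w n./2) => [/low //|lt_half_w].
  case: (leqP w n) => [le_wn|]; last by move/bin_small->.
  by rewrite -bin_sub //; apply: low; lia.
move=> le_k_half; rewrite -(subnK le_k_half).
have : (n./2 - k + k <= n./2)%N by rewrite subnK.
elim: (n./2 - k)%N => [//|j IHj] le_jk.
apply: leq_trans (IHj (ltnW le_jk)) _; rewrite addSn; apply: leq_bin_succ; lia.
Qed.

Lemma mul_bin_mid m : (m.+1 * 'C(m.*2.+1, m) = m.*2.+1 * 'C(m.*2, m))%N.
Proof.
rewrite (mul_bin_diag m.*2.+1 m) -[in RHS]bin_sub; last by rewrite ltnS -addnn leq_addl.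
by rewrite -addnn subSS addnK.
Qed.

Lemma central_bin_sq_leq m : ('C(m.*2, m) ^ 2 * m.*2.+1 <= 16 ^ m)%N.
Proof.
elim: m => [//|m IHm].
have double_mid : ('C(m.+1.*2, m.+1) = 2 * 'C(m.*2.+1, m))%N.
  apply/eqP; rewrite -(eqn_pmul2l (ltn0Sn m)) -mul_bin_diag doubleS /=.
  by rewrite -!mul2n; apply/eqP; ring.
rewrite double_mid -(@leq_pmul2l (m.+1 ^ 2)) ?expn_gt0 //.
have -> : (m.+1 ^ 2 * ((2 * 'C(m.*2.+1, m)) ^ 2 * m.+1.*2.+1)
    = 4 * (m.*2.+1 * m.+1.*2.+1) * ('C(m.*2, m) ^ 2 * m.*2.+1))%N.
  have -> : (m.+1 ^ 2 * ((2 * 'C(m.*2.+1, m)) ^ 2 * m.+1.*2.+1)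
      = 4 * (m.+1 * 'C(m.*2.+1, m)) ^ 2 * m.+1.*2.+1)%N by ring.
  by rewrite mul_bin_mid; ring.
rewrite [16 ^ _]expnS [leqRHS]mulnA; apply: leq_mul IHm.
by rewrite !doubleS -!mul2n; nia.
Qed.

Lemma central_bin_sq_odd_leq m : ('C(m.*2.+1, m) ^ 2 * m.*2.+2 <= 4 ^ m.*2.+1)%N.
Proof.
have -> : (4 ^ m.*2.+1 = 4 * 16 ^ m)%N by rewrite expnS -mul2n expnM.
rewrite -(@leq_pmul2l (m.+1 ^ 2)) ?expn_gt0 //.
have -> : (m.+1 ^ 2 * ('C(m.*2.+1, m) ^ 2 * m.*2.+2)
    = (m.*2.+1 * m.*2.+2) * ('C(m.*2, m) ^ 2 * m.*2.+1))%N.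
  have -> : (m.+1 ^ 2 * ('C(m.*2.+1, m) ^ 2 * m.*2.+2)
      = (m.+1 * 'C(m.*2.+1, m)) ^ 2 * m.*2.+2)%N by ring.
  by rewrite mul_bin_mid; ring.
rewrite [leqRHS]mulnA; apply: leq_mul (central_bin_sq_leq m).
by rewrite -!mul2n; nia.
Qed.

Lemma bin_sq_leq a w : ('C(a, w) ^ 2 * a.+1 <= 4 ^ a)%N.
Proof.
apply: leq_trans (_ : 'C(a, a./2) ^ 2 * a.+1 <= _)%N.
  by rewrite leq_mul2r leq_exp2r ?leq_bin_half ?orbT.
rewrite -{1 3 4}(odd_double_half a); case: (odd a) => /=.
  by rewrite add1n; apply: central_bin_sq_odd_leq.
by rewrite add0n -[in leqRHS]mul2n expnM; apply: central_bin_sq_leq.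
Qed.

Lemma card_setIdE (T : finType) (W : {set T}) (P : pred T) :
  #|[set x in W | P x]| = (\sum_(x in W) P x)%N.
Proof.
rewrite -sum1_card (eq_bigl (fun x => (x \in W) && P x)) => [|x]; last by rewrite inE.
by rewrite big_mkcondr; apply: eq_bigr => x _; case: (P x).
Qed.

Lemma card_setE (T : finType) (P : pred T) : #|[set x | P x]| = (\sum_x P x)%N.
Proof.
by rewrite -sum1dep_card big_mkcond; apply: eq_bigr => x _; case: (P x).
Qed.

Lemma leq_card_cover (T I : finType) (G : {set T}) (J : {set I}) (B : I -> {set T}) :
  (forall x, x \notin G -> exists2 i, i \in J & x \in B i) ->
  (#|T| <= #|G| + \sum_(i in J) #|B i|)%N.
Proof.
move=> cover.
have card_sum (S : {set T}) : #|S| = (\sum_x (x \in S))%N.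
  by rewrite -card_setE; apply: eq_card => x; rewrite inE.
rewrite -cardsT !card_sum; under [X in (_ <= _ + X)%N]eq_bigr => i _ do rewrite card_sum.
rewrite exchange_big -big_split /=; apply: leq_sum => x _.
rewrite in_setT; case Gx: (x \in G) => //; have [i Ji Bi] := cover x (negbT Gx).
by rewrite (bigD1 i) //= Bi.
Qed.

Section Flip.
Variable T : finType.
Implicit Types (p q : T) (f : {ffun T -> bool}).

Definition flip p f : {ffun T -> bool} := [ffun z => if z == p then ~~ f z else f z].

Lemma flipE p f z : flip p f z = if z == p then ~~ f z else f z.
Proof. by rewrite ffunE. Qed.

Lemma flipK p : involutive (flip p).
Proof.
by move=> f; apply/ffunP => z; rewrite !flipE; case: eqP => // _; rewrite negbK.
Qed.

Lemma flip_neq p f : flip p f != f.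
Proof. by apply/eqP => /ffunP /(_ p); rewrite flipE eqxx; case: (f p). Qed.

(* Flipping at [p] is a bijection exchanging [f p != f q] and [f p == f q]. *)
Lemma card_ffun_neq_half p q (Q : pred {ffun T -> bool}) :
  p != q -> (forall f, Q (flip p f) = Q f) ->
  (2 * #|[set f | Q f && (f p != f q)]| = #|[set f | Q f]|)%N.
Proof.
move=> neq_pq Qflip; have qp : (q == p) = false by rewrite eq_sym (negbTE neq_pq).
have flip_neq_eq : flip p @: [set f | Q f && (f p != f q)] = [set f | Q f && (f p == f q)].
  apply/setP => f; rewrite inE; apply/imsetP/idP => [[g]|/andP [Qf eqf]].
    rewrite inE => /andP [Qg neqg] ->; rewrite Qflip Qg !flipE eqxx qp.
    by move: neqg; case: (g p); case: (g q).
  exists (flip p f); last by rewrite flipK.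
  by rewrite inE Qflip Qf !flipE eqxx qp (eqP eqf); case: (f q).
rewrite -[RHS](cardsID [set f : {ffun T -> bool} | f p != f q]) mul2n -addnn.
congr (_ + _)%N; first by apply: eq_card => f; rewrite !inE.
rewrite -[LHS](card_imset _ (can_inj (flipK p))) flip_neq_eq.
by apply: eq_card => f; rewrite !inE negbK andbC.
Qed.
End Flip.

Section Subcube.
Variable n : nat.
Implicit Types (A B : {set 'I_n}) (u v x : pt n).

(* The points of [subcube B] are the values of [restr B], i.e. they encode {0,1}^B. *)
Definition subcube B : {set pt n} := [set u | restr B u == u].

Lemma restrE B x i : restr B x i = (i \in B) && x i.
Proof. by rewrite ffunE. Qed.

Lemma subcubeP B u : reflect (forall i, u i -> i \in B) (u \in subcube B).
Proof.
rewrite inE; apply: (iffP eqP) => [<- i|sub_uB]; first by rewrite restrE => /andP [].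
by apply/ffunP => i; rewrite restrE; case ui: (u i); rewrite ?andbF ?andbT ?sub_uB.
Qed.

Lemma restr_subcube B x : restr B x \in subcube B.
Proof. by apply/subcubeP => i; rewrite restrE => /andP []. Qed.

Lemma wt_restr A x : wt A (restr A x) = wt A x.
Proof. by apply: eq_card => i; rewrite !inE restrE; case: (i \in A). Qed.

Lemma wt_le A u : (wt A u <= #|A|)%N.
Proof. by apply: subset_leq_card; apply/subsetP => i; rewrite inE => /andP []. Qed.

Definition ones u : {set 'I_n} := [set i | u i].

Lemma wt_ones A u : u \in subcube A -> wt A u = #|ones u|.
Proof.
move/subcubeP => sub_uA; apply: eq_card => i; rewrite !inE.
by case ui: (u i); rewrite ?andbF ?andbT ?sub_uA.
Qed.

Lemma ones_inj : injective ones.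
Proof.
move=> u v eq_uv; apply/ffunP => i.
by have := congr1 (fun X : {set 'I_n} => i \in X) eq_uv; rewrite !inE.
Qed.

Lemma card_subcube_wt_pred A (P : pred nat) :
  #|[set u in subcube A | P (wt A u)]| = #|[set X : {set 'I_n} | (X \subset A) && P #|X|]|.
Proof.
rewrite -(card_imset _ ones_inj); apply: eq_card => X; rewrite inE.
apply/imsetP/andP => [[u]|[sub_XA PX]].
  rewrite inE => /andP [Au Pu] ->; rewrite -(wt_ones Au) Pu; split=> //.
  by apply/subsetP => i; rewrite inE; move/subcubeP: Au; apply.
have onesX : ones [ffun i => i \in X] = X by apply/setP => i; rewrite inE ffunE.
exists [ffun i => i \in X] => //.
have subX : [ffun i => i \in X] \in subcube A.
  by apply/subcubeP => i; rewrite ffunE => /(subsetP sub_XA).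
by rewrite inE subX wt_ones // onesX.
Qed.

Lemma card_subcube A : #|subcube A| = (2 ^ #|A|)%N.
Proof.
rewrite -card_powerset -[subcube A]setIT -[_ :&: _]setIdE.
by rewrite (card_subcube_wt_pred A xpredT); apply: eq_card => X; rewrite !inE andbT.
Qed.

Lemma card_subcube_wt A w : #|[set u in subcube A | wt A u == w]| = 'C(#|A|, w).
Proof. by rewrite (card_subcube_wt_pred A (pred1 w)) cards_draws. Qed.

Lemma leq_card_wt_window A (P : pred (pt n)) (t k : nat) :
  (forall u, u \in subcube A -> P u -> t <= wt A u < t + k)%N ->
  (#|[set u in subcube A | P u]| <= k * 'C(#|A|, #|A|./2))%N.
Proof.
move=> window; rewrite card_setIdE.
apply: (@leq_trans (\sum_(u in subcube A) \sum_(t <= w < t + k) (wt A u == w))%N).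
  apply: leq_sum => u Au; case: (boolP (P u)) => // Pu.
  have wt_in : wt A u \in index_iota t (t + k) by rewrite mem_index_iota window.
  by rewrite (bigD1_seq (wt A u)) ?iota_uniq //= eqxx.
rewrite exchange_big /=.
apply: (@leq_trans (\sum_(t <= w < t + k) 'C(#|A|, #|A|./2))%N).
  by apply: leq_sum => w _; rewrite -card_setIdE card_subcube_wt leq_bin_half.
by rewrite sum_nat_const_nat addKn.
Qed.

Definition glue A u v : pt n := [ffun i => if i \in A then u i else v i].

Lemma restr_glue_l A u v : u \in subcube A -> restr A (glue A u v) = u.
Proof.
move/subcubeP => sub_uA; apply/ffunP => i; rewrite restrE ffunE.
by case: ifP => // /negbT Ai; apply/esym/negbTE; apply: contra Ai; apply: sub_uA.
Qed.

Lemma restr_glue_r A u v : v \in subcube (~: A) -> restr (~: A) (glue A u v) = v.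
Proof.
move/subcubeP => sub_vC; apply/ffunP => i; rewrite restrE ffunE inE.
by case: ifP => //= Ai; apply/esym/negbTE/negP => /sub_vC; rewrite inE Ai.
Qed.

Lemma glue_restr A x : glue A (restr A x) (restr (~: A) x) = x.
Proof. by apply/ffunP => i; rewrite !ffunE inE; case: (i \in A). Qed.

Lemma card_restr_split A (P : pt n -> pt n -> bool) :
  #|[set x | P (restr A x) (restr (~: A) x)]| =
  (\sum_(v in subcube (~: A)) #|[set u in subcube A | P u v]|)%N.
Proof.
rewrite -sum1_card (partition_big (restr (~: A)) [in subcube (~: A)]) => [/=|x _];
  last exact: restr_subcube.
apply: eq_bigr => v Cv; rewrite sum1dep_card.
have glue_inj : {in [set u in subcube A | P u v] &, injective (glue A ^~ v)}.
  by move=> u1 u2 /setIdP [A1 _] /setIdP [A2 _] /(congr1 (restr A)); rewrite !restr_glue_l.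
rewrite -(card_in_imset glue_inj); apply: eq_card => x; rewrite !inE.
apply/andP/imsetP => [[Px /eqP <-]|[u /setIdP [Au Pu] ->]].
  by exists (restr A x); rewrite ?glue_restr //; apply/setIdP; rewrite restr_subcube.
by rewrite /= restr_glue_l // restr_glue_r.
Qed.

Lemma restr_flip B x i : i \in B -> restr B (flip i x) = flip i (restr B x).
Proof.
by move=> Bi; apply/ffunP => j; rewrite restrE !flipE restrE; case: eqP => // ->; rewrite Bi.
Qed.

Lemma restr_flip_out B x i :
  i \notin B -> restr B (flip i x) = restr B x.
Proof.
by move=> Bi; apply/ffunP => j; rewrite !restrE flipE; case: eqP => // ->; rewrite (negbTE Bi).
Qed.

Lemma subcube_flip B v i : i \in B -> v \in subcube B -> flip i v \in subcube B.
Proof.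
by move=> Bi /subcubeP sub_vB; apply/subcubeP => j; rewrite flipE; case: eqP => [->|_ /sub_vB].
Qed.

Definition compl A u : pt n := [ffun j => (j \in A) && ~~ u j].

Lemma compl_subcube A u : compl A u \in subcube A.
Proof. by apply/subcubeP => j; rewrite ffunE => /andP []. Qed.

Lemma complK A u : u \in subcube A -> compl A (compl A u) = u.
Proof.
move/subcubeP => sub_uA; apply/ffunP => j; rewrite !ffunE.
case: (boolP (j \in A)) => [_|Aj] /=; first by rewrite negbK.
by apply/esym/negbTE; apply: contra Aj; apply: sub_uA.
Qed.

Lemma wt_compl A u : wt A (compl A u) = (#|A| - wt A u)%N.
Proof.
rewrite /wt; have -> : [set i in A | compl A u i] = A :\: [set i in A | u i].
  by apply/setP => i; rewrite !inE ffunE; case: (i \in A); rewrite ?andbT ?andbF.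
by rewrite cardsD; congr (_ - _)%N; apply: eq_card => i; rewrite !inE andbA andbb.
Qed.
End Subcube.

Section FlipDisagreements.
Variables (X : finType) (V : {set X}) (fl : X -> X).
Hypotheses (flV : forall v, v \in V -> fl v \in V) (neq_fl : forall v, v != fl v).
Hypothesis flK : involutive fl.

Definition differs v (b : {ffun X -> bool}) := b v != b (fl v).

Definition ndiff b := #|[set v in V | differs v b]|.

Lemma card_differs v : (2 * #|[set b | differs v b]| = #|{ffun X -> bool}|)%N.
Proof.
have := card_ffun_neq_half (Q := xpredT) (neq_fl v) (fun=> erefl); rewrite cardsT => <-.
by congr (2 * _)%N; apply: eq_card => b; rewrite !inE.
Qed.

(* For [w] outside [{v, fl v}], flipping [b] at [v] preserves [differs w]. *)
Lemma card_differs2 v w :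
  (4 * #|[set b | differs v b && differs w b]| =
   if (w == v) || (w == fl v) then 2 * #|{ffun X -> bool}| else #|{ffun X -> bool}|)%N.
Proof.
case: ifPn => [/orP wv|].
  have -> : [set b | differs v b && differs w b] = [set b | differs v b].
    apply/setP => b; rewrite !inE /differs.
    by case: wv => /eqP ->; rewrite ?flK eq_sym andbb.
  by rewrite -(card_differs v); lia.
rewrite negb_or => /andP [w_neq_v w_neq_flv].
have flw_neq_v : fl w != v by apply: contraNneq w_neq_flv => <-; rewrite flK.
have differs_flip b : differs w (flip v b) = differs w b.
  by rewrite /differs !flipE (negbTE w_neq_v) (negbTE flw_neq_v).
rewrite -(card_differs w) -[4]/(2 * 2)%N -mulnA.
rewrite -(card_ffun_neq_half (neq_fl v) differs_flip).
by congr (2 * (2 * _))%N; apply: eq_card => b; rewrite !inE andbC.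
Qed.

Lemma sum_ndiff : (2 * \sum_b ndiff b = #|V| * #|{ffun X -> bool}|)%N.
Proof.
under eq_bigr do rewrite /ndiff card_setIdE.
rewrite exchange_big big_distrr -sum_nat_const; apply: eq_bigr => v _.
by rewrite /= -card_setE card_differs.
Qed.

Lemma sum_ndiff_sq :
  (4 * \sum_b ndiff b ^ 2 = #|V| * (#|V| + 2) * #|{ffun X -> bool}|)%N.
Proof.
have sq_ndiff b : (ndiff b ^ 2 = \sum_(v in V) \sum_(w in V) (differs v b && differs w b))%N.
  rewrite /ndiff card_setIdE expnS expn1 big_distrlr.
  by apply: eq_bigr => v _; apply: eq_bigr => w _; rewrite /= mulnb.
under eq_bigr do rewrite sq_ndiff.
rewrite exchange_big big_distrr -mulnA -sum_nat_const; apply: eq_bigr => v Vv.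
rewrite exchange_big big_distrr /=.
under eq_bigr do rewrite -card_setE card_differs2.
have paired : [set w in V | (w == v) || (w == fl v)] = [set v; fl v].
  apply/setP => w; rewrite !inE andb_orr.
  by case: eqP => [->|]; case: eqP => [->|]; rewrite ?Vv ?flV ?andbF.
have := card_setIdE V (fun w => (w == v) || (w == fl v)).
rewrite paired cards2 neq_fl => two.
rewrite (eq_bigr (fun w => #|{ffun X -> bool}| + ((w == v) || (w == fl v)) * #|{ffun X -> bool}|))%N.
  by rewrite big_split /= -big_distrl /= -two sum_nat_const; lia.
by move=> w _; case: ifP; rewrite /= ?mul1n ?mul0n ?addn0 //; lia.
Qed.

Lemma sum_dist_ndiff_sq :
  (\sum_b `|#|V| - 2 * ndiff b| ^ 2 = 2 * #|V| * #|{ffun X -> bool}|)%N.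
Proof.
have expand b : (`|#|V| - 2 * ndiff b| ^ 2 + 2 * #|V| * (2 * ndiff b)
    = #|V| ^ 2 + 4 * ndiff b ^ 2)%N.
  by rewrite -mulnA sqrn_dist; ring.
have summed : (\sum_b `|#|V| - 2 * ndiff b| ^ 2 + 2 * #|V| * (2 * \sum_b ndiff b)
    = #|{ffun X -> bool}| * #|V| ^ 2 + 4 * \sum_b ndiff b ^ 2)%N.
  rewrite -sum_nat_const !big_distrr -!big_split /=.
  by apply: eq_big => // b _; apply: expand.
by move: summed; rewrite sum_ndiff; have := sum_ndiff_sq; lia.
Qed.

(* Chebyshev: [ndiff] has mean [#|V|/2] and variance [#|V|/4]. *)
Lemma leq_card_ndiff_small :
  (#|[set b | 50 * ndiff b < 24 * #|V|]| * #|V| <= 1250 * #|{ffun X -> bool}|)%N.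
Proof.
have markov : (#|[set b | 50 * ndiff b < 24 * #|V|]| * #|V| ^ 2
    <= 625 * \sum_b `|#|V| - 2 * ndiff b| ^ 2)%N.
  rewrite card_setE big_distrl big_distrr /=; apply: leq_sum => b _.
  case: ltnP => [small|_]; rewrite ?mul0n // mul1n distnEl; last by lia.
  by rewrite (_ : 625 = 25 ^ 2)%N // -expnMn leq_exp2r //; lia.
case: (posnP #|V|) => [->|V_gt0]; first by rewrite muln0.
by move: markov; rewrite sum_dist_ndiff_sq; nia.
Qed.

End FlipDisagreements.

Local Open Scope ring_scope.

Section Thresholds.
Variable R : realType.

Lemma bin_mul_sqrt_le a w : 'C(a, w)%:R * Num.sqrt (a%:R : R) <= (2 ^ a)%:R.
Proof.
have := bin_sq_leq a w; rewrite -(ler_nat R) (_ : 4 ^ a = (2 ^ a) ^ 2)%N; last first.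
  by rewrite -expnM mulnC expnM.
rewrite natrM !natrX -natr1 => sq_le.
rewrite -(ler_pXn2r (n := 2)) ?nnegrE ?mulr_ge0 ?sqrtr_ge0 ?exprn_ge0 //.
rewrite exprMn sqr_sqrtr //; apply: le_trans sq_le.
by rewrite ler_wpM2l ?exprn_ge0 // lerDl.
Qed.

Lemma fnoE n (A : {set 'I_n}) (b : {ffun pt n -> bool}) x :
  fno R A b x = if b (restr (~: A) x) then h1 R A (restr A x) else h0 R A (restr A x).
Proof. by rewrite /fno /h0 /h1 !wt_restr. Qed.

Lemma h0_h1_excl n (A : {set 'I_n}) x : ~~ (h0 R A x && h1 R A x).
Proof.
apply/negP => /andP []; rewrite /h0 /h1.
have : 0 <= 1 / 20 * Num.sqrt (n./2)%:R :> R by apply: mulr_ge0; [lra | apply: sqrtr_ge0].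
lra.
Qed.

Lemma h1_compl n (A : {set 'I_n}) u : #|A| = n./2 -> h1 R A (compl A u) = h0 R A u.
Proof.
move=> cardA; rewrite /h0 /h1 wt_compl natrB ?wt_le // cardA.
by apply/idP/idP; lra.
Qed.

Lemma card_h0_h1 n (A : {set 'I_n}) : #|A| = n./2 ->
  #|[set u in subcube A | h0 R A u]| = #|[set u in subcube A | h1 R A u]|.
Proof.
move=> cardA; have compl_inj : {in [set u in subcube A | h0 R A u] &, injective (compl A)}.
  by move=> u v /setIdP [Au _] /setIdP [Av _] /(congr1 (compl A)); rewrite !complK.
rewrite -(card_in_imset compl_inj); apply: eq_card => u; rewrite inE.
apply/imsetP/andP => [[v /setIdP [_ h0v] ->]|[Au h1u]].
  by rewrite compl_subcube h1_compl.
by exists (compl A u); rewrite ?complK // inE compl_subcube -(h1_compl _ cardA) complK.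
Qed.

Lemma card_h0_or_h1E n (A : {set 'I_n}) :
  #|[set u in subcube A | h0 R A u]| = #|[set u in subcube A | h1 R A u]| ->
  #|[set u in subcube A | h0 R A u || h1 R A u]| = (2 * #|[set u in subcube A | h0 R A u]|)%N.
Proof.
move=> card_h01; rewrite mul2n -addnn {2}card_h01 -cardsUI.
have -> : [set u in subcube A | h0 R A u] :&: [set u in subcube A | h1 R A u] = set0.
  apply/setP => u; rewrite !inE andbACA andbb; apply/negbTE/nandP; right.
  exact: h0_h1_excl.
by rewrite cards0 addn0; apply: eq_card => u; rewrite !inE andb_orr.
Qed.

Lemma leq_card_band n (A : {set 'I_n}) :
  (#|[set u in subcube A | ~~ h0 R A u && ~~ h1 R A u]|
    <= (Num.truncn (Num.sqrt (n./2)%:R / 10 : R) + 2) * 'C(#|A|, #|A|./2))%N.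
Proof.
set s := Num.sqrt (n./2)%:R : R; set lo := (n./2)%:R / 2 - 1 / 20 * s.
apply: (leq_card_wt_window (t := Num.truncn lo)) => u _ /andP [].
rewrite /h0 /h1 -!leNgt -/s => wt_le_hi lo_le_wt; apply/andP; split.
  by rewrite truncn_le_nat -natr1 /lo; lra.
have lo_lt : lo < (Num.truncn lo)%:R + 1 by rewrite natr1 truncnS_gt.
have s_lt : s / 10 < (Num.truncn (s / 10))%:R + 1 by rewrite natr1 truncnS_gt.
by rewrite -(ltr_nat R) !natrD; move: lo_lt; rewrite /lo; lra.
Qed.

Lemma leq_card_h0_or_h1 n (A : {set 'I_n}) : #|A| = n./2 -> (100 ^ 2 <= n./2)%N ->
  (43 * 2 ^ n./2 <= 50 * #|[set u in subcube A | h0 R A u || h1 R A u]|)%N.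
Proof.
move=> cardA a_large.
have split_band : (#|[set u in subcube A | h0 R A u || h1 R A u]|
    + #|[set u in subcube A | ~~ h0 R A u && ~~ h1 R A u]| = 2 ^ n./2)%N.
  rewrite -cardA -card_subcube -[RHS](cardsID [set u | h0 R A u || h1 R A u]).
  by congr (_ + _)%N; apply: eq_card => u; rewrite !inE ?negb_or andbC.
suff : (50 * #|[set u in subcube A | ~~ h0 R A u && ~~ h1 R A u]| <= 7 * 2 ^ n./2)%N.
  by lia.
apply: leq_trans (leq_mul (leqnn 50) (leq_card_band A)) _.
set s := Num.sqrt (n./2)%:R : R; set M := 'C(#|A|, #|A|./2).
have s_large : 100 <= s.
  rewrite -[100 : R]ger0_norm // -sqrtr_sqr ler_sqrt // -natrX ler_nat.
  exact: leq_trans a_large.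
have Ms_le : M%:R * s <= (2 ^ n./2)%:R by rewrite /s /M -cardA; apply: bin_mul_sqrt_le.
have k_le : (Num.truncn (s / 10))%:R <= s / 10.
  by rewrite truncn_le divr_ge0 ?sqrtr_ge0.
have M_ge0 : 0 <= M%:R :> R by [].
rewrite -(ler_nat R) !natrM natrD; nra.
Qed.
End Thresholds.

Section Farness.
Variables (R : realType) (n a : nat) (A : {set 'I_n}) (b : {ffun pt n -> bool}).
Hypotheses (cardA : #|A| = a) (n_double : n = (a + a)%N).

Lemma dist_ge_fifth (f g : pt n -> bool) :
  (2 ^ n <= 5 * #|[set x | f x != g x]|)%N -> (1 / 5 : R) <= dist R f g.
Proof.
move=> dist_ge; rewrite /dist ler_pdivlMr ?ltr0n ?expn_gt0 // mul1r.
by rewrite mulrC ler_pdivrMr ?ltr0n // -natrM ler_nat mulnC.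
Qed.

Lemma card_setC_half : #|~: A| = a.
Proof. by have := cardsC A; rewrite cardA card_ord; lia. Qed.

Lemma card_subcube_setC : #|subcube (~: A)| = (2 ^ a)%N.
Proof. by rewrite card_subcube card_setC_half. Qed.

(* If [g] reads only [x_C], it is constant on every fibre [x_C = v], where [f] is [h0] or [h1]. *)
Lemma leq_card_disagree_fibrewise (g : pt n -> bool) :
  (forall x, g x = g (restr (~: A) x)) ->
  #|[set u in subcube A | h0 R A u]| = #|[set u in subcube A | h1 R A u]| ->
  (2 ^ a * #|[set u in subcube A | h0 R A u]| <= #|[set x | fno R A b x != g x]|)%N.
Proof.
move=> g_fibre card_h01.
pose P u v := (if b v then h1 R A u else h0 R A u) != g v.
have -> : [set x | fno R A b x != g x] = [set x | P (restr A x) (restr (~: A) x)].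
  by apply/setP => x; rewrite !inE fnoE [g x]g_fibre.
have mono (Q1 Q2 : pred (pt n)) : (forall u, Q1 u -> Q2 u) ->
    (#|[set u in subcube A | Q1 u]| <= #|[set u in subcube A | Q2 u]|)%N.
  by move=> Q12; apply: subset_leq_card; apply/subsetP => u; rewrite !inE => /andP [-> /Q12].
rewrite card_restr_split -card_subcube_setC -sum_nat_const; apply: leq_sum => v _.
have excl u := h0_h1_excl R A u.
rewrite /P; case: (b v); case: (g v); rewrite ?card_h01; [rewrite -card_h01 | | | rewrite -card_h01];
  by apply: mono => u; move: (excl u); case: (h0 R A u); case: (h1 R A u).
Qed.

Lemma fno_flip_neq i x : i \in ~: A ->
  h0 R A (restr A x) || h1 R A (restr A x) -> differs (flip i) (restr (~: A) x) b ->
  fno R A b (flip i x) != fno R A b x.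
Proof.
move=> Ci; have Ai : i \notin A by rewrite inE in Ci.
rewrite !fnoE restr_flip // restr_flip_out // /differs.
move: (h0_h1_excl R A (restr A x)).
by case: (b _); case: (b _); case: (h0 R A _); case: (h1 R A _).
Qed.

Lemma leq_card_disagree_flip (g : pt n -> bool) i : i \in ~: A ->
  (forall x, g (flip i x) = g x) ->
  (#|[set u in subcube A | h0 R A u || h1 R A u]| * ndiff (subcube (~: A)) (flip i) b
    <= 2 * #|[set x | fno R A b x != g x]|)%N.
Proof.
move=> Ci g_flip; set F := [set x | fno R A b x != g x].
pose E := [set x | (h0 R A (restr A x) || h1 R A (restr A x))
                   && differs (flip i) (restr (~: A) x) b].
have card_E : #|E| = (#|[set u in subcube A | h0 R A u || h1 R A u]|
                      * ndiff (subcube (~: A)) (flip i) b)%N.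
  rewrite (card_restr_split A (fun u v => (h0 R A u || h1 R A u) && differs (flip i) v b)).
  rewrite /ndiff (card_setIdE (subcube (~: A))) big_distrr /=; apply: eq_bigr => v _.
  case: (differs _ v b); rewrite ?muln1 ?muln0.
    by apply: eq_card => u; rewrite !inE andbT.
  by apply: eq_card0 => u; rewrite !inE !andbF.
have E_sub : E \subset F :|: flip i @: F.
  apply/subsetP => x; rewrite inE => /andP [out dif]; rewrite in_setU inE.
  case: (boolP (fno R A b x != g x)) => //= /negPn /eqP fx_gx.
  apply/imsetP; exists (flip i x); last by rewrite flipK.
  by rewrite inE g_flip -fx_gx fno_flip_neq.
rewrite -card_E; apply: leq_trans (subset_leq_card E_sub) _.
apply: leq_trans (leq_card_setU _ _) _.
by rewrite card_imset ?addnn ?mul2n //; apply: can_inj (flipK i).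
Qed.

Lemma far_from_juntas_fno :
  (43 * 2 ^ a <= 50 * #|[set u in subcube A | h0 R A u || h1 R A u]|)%N ->
  #|[set u in subcube A | h0 R A u]| = #|[set u in subcube A | h1 R A u]| ->
  (forall i, i \in ~: A -> 24 * 2 ^ a <= 50 * ndiff (subcube (~: A)) (flip i) b)%N ->
  far_from_juntas (1 / 5 : R) a (fno R A b).
Proof.
move=> many_out card_h01 spread g [S [card_S g_S]]; apply: dist_ge_fifth.
have two_n : (2 ^ n = 2 ^ a * 2 ^ a)%N by rewrite n_double expnD.
have := card_h0_or_h1E card_h01; rewrite two_n.
case: (boolP (~: A \subset S)) => [CS|/subsetPn [i Ci Si]] out_split.
  have S_eq : ~: A = S by apply/eqP; rewrite eqEcard CS card_setC_half.
  have g_fibre x : g x = g (restr (~: A) x).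
    by apply: g_S => j; rewrite -S_eq => Cj; rewrite restrE Cj.
  by have := leq_card_disagree_fibrewise g_fibre card_h01; nia.
have g_flip x : g (flip i x) = g x.
  by apply: g_S => j Sj; rewrite flipE; case: eqP => // ji; rewrite -ji Sj in Si.
by have := leq_card_disagree_flip Ci g_flip; have := spread i Ci; nia.
Qed.
End Farness.

Lemma leq_card_not_far_fno (R : realType) n a (A : {set 'I_n}) :
  #|A| = a -> n = (a + a)%N -> (100 ^ 2 <= a)%N ->
  (2 ^ a * (#|{ffun pt n -> bool}|
     - #|[set b | `[< far_from_juntas (1 / 5 : R) a (fno R A b) >] ]|)
   <= 1250 * a * #|{ffun pt n -> bool}|)%N.
Proof.
move=> cardA n_double a_large; have half_n : n./2 = a by rewrite n_double addnn doubleK.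
pose bad i := [set b | 50 * ndiff (subcube (~: A)) (flip i) b < 24 * #|subcube (~: A)|]%N.
have card_bad i : i \in ~: A -> (#|bad i| * 2 ^ a <= 1250 * #|{ffun pt n -> bool}|)%N.
  move=> Ci; rewrite -(card_subcube_setC cardA n_double).
  apply: leq_card_ndiff_small => [v|v|]; first exact: subcube_flip.
    by rewrite eq_sym flip_neq.
  exact: flipK.
set far := [set b | `[< far_from_juntas (1 / 5 : R) a (fno R A b) >] ].
have cover b : b \notin far -> exists2 i, i \in ~: A & b \in bad i.
  move=> not_far; apply/exists_inP; apply: contraNT not_far => no_bad.
  rewrite inE; apply/asboolP; apply: (far_from_juntas_fno cardA n_double).
  - by rewrite -half_n; apply: leq_card_h0_or_h1; rewrite half_n.
  - by apply: card_h0_h1; rewrite half_n.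
  move=> i Ci; rewrite leqNgt; apply: contra no_bad => small.
  by apply/exists_inP; exists i; rewrite // inE (card_subcube_setC cardA n_double).
have sum_bad : ((\sum_(i in ~: A) #|bad i|) * 2 ^ a <= 1250 * a * #|{ffun pt n -> bool}|)%N.
  rewrite big_distrl /=.
  apply: (@leq_trans (\sum_(i in ~: A) 1250 * #|{ffun pt n -> bool}|)%N); first exact: leq_sum.
  by rewrite sum_nat_const (card_setC_half cardA n_double); lia.
have := leq_card_cover cover => cover_le.
by rewrite mulnC; apply: leq_trans sum_bad; apply: leq_mul; rewrite ?leq_subLR.
Qed.

Lemma sqrn_leq_exp2 a : (4 <= a)%N -> (a ^ 2 <= 2 ^ a)%N.
Proof.
move=> a_ge4; rewrite -(subnK a_ge4); elim: (a - 4)%N => [//|k IHk].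
rewrite addSn [(2 ^ _)%N]expnS; apply: leq_trans (leq_mul (leqnn 2) IHk); nia.
Qed.

Section Asymptotics.
Variable R : realType.

Lemma linear_over_exp2_small (c eps : R) : 0 < eps ->
  exists N, forall a, (N <= a)%N -> c * a%:R / (2 ^ a)%:R <= eps.
Proof.
move=> eps_gt0; exists (maxn 4 (Num.truncn (c / eps)).+1) => a.
rewrite geq_max => /andP [a_ge4 a_gt].
have a_gt_r : c / eps < a%:R by apply: lt_le_trans (truncnS_gt _) _; rewrite ler_nat.
have a2_le : a%:R ^+ 2 <= (2 ^ a)%:R :> R by rewrite -natrX ler_nat sqrn_leq_exp2.
rewrite ler_pdivrMr ?ltr0n ?expn_gt0 //; apply: le_trans (ler_wpM2l (ltW eps_gt0) a2_le).
rewrite expr2 mulrA ler_wpM2r //; rewrite ltr_pdivrMr // in a_gt_r.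
by rewrite mulrC ltW.
Qed.

Lemma frac_far_fno_ge n a (A : {set 'I_n}) :
  #|A| = a -> n = (a + a)%N -> (100 ^ 2 <= a)%N ->
  (1 - 1250 * a%:R / (2 ^ a)%:R : R)
    <= #|[set b | `[< far_from_juntas (1 / 5 : R) a (fno R A b) >] ]|%:R
       / #|{ffun pt n -> bool}|%:R.
Proof.
move=> cardA n_double a_large; have := leq_card_not_far_fno R cardA n_double a_large.
set G := #|[set b | _]|; set T := #|{ffun pt n -> bool}| => not_far.
have G_le : (G <= T)%N by apply: max_card.
have T_gt0 : 0 < T%:R :> R by rewrite ltr0n; apply/card_gt0P; exists [ffun=> false].
have X_gt0 : 0 < (2 ^ a)%:R :> R by rewrite ltr0n expn_gt0.
rewrite -(ler_nat R) !natrM natrB // in not_far.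
have key : (T%:R - G%:R) / T%:R <= 1250 * a%:R / (2 ^ a)%:R :> R.
  by rewrite ler_pdivrMr // mulrAC ler_pdivlMr // mulrC.
by move: key; rewrite mulrBl divff ?gt_eqF //; lra.
Qed.

Lemma prob_no_ge n (P : (pt n -> bool) -> Prop) (c : R) :
  (forall A : {set 'I_n}, #|A| = n./2 ->
     c <= #|[set b | `[< P (fno R A b) >] ]|%:R / #|{ffun pt n -> bool}|%:R) ->
  c <= prob_no R P.
Proof.
move=> c_le; rewrite /prob_no; set As := [set A : {set 'I_n} | #|A| == n./2].
have As_gt0 : (0 < #|As|)%N by rewrite card_draws card_ord bin_gt0 -divn2 leq_div.
rewrite ler_pdivlMr ?ltr0n // mulr_natr -sumr_const.
by apply: ler_sum => A; rewrite inE => /eqP /c_le.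
Qed.
End Asymptotics.

Theorem mainTheorem12 (R : realType) (eps : R) (heps : 0 < eps) :
  exists N : nat, forall n : nat, ~~ odd n -> (N <= n)%N ->
    1 - eps <= @prob_no R n (fun f => @far_from_juntas R n (1/5) n./2 f).
Proof.
have [N small] := linear_over_exp2_small 1250 heps.
exists (maxn (100 ^ 2)%N N).*2 => n even_n n_large.
have n_double : n = (n./2 + n./2)%N by rewrite addnn even_halfK.
have /andP [a_ge a_geN] : (100 ^ 2 <= n./2)%N && (N <= n./2)%N.
  by rewrite -geq_max -leq_double even_halfK.
apply: prob_no_ge => A cardA.
apply: le_trans _ (frac_far_fno_ge R cardA n_double a_ge).
by rewrite lerD2l lerN2 small.
Qed.
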